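(* Let $G=K_{r_1,\dots,r_k}$ with partition sets $X_1,\dots,X_k$, $|X_i|=r_i$. Suppose $H$ is a good bisection of $G$ with partition sets $V_1,V_2$. Then for each $i\in[k]$: (i) if $X_i$ crosses $H$ and $|\overline{X_i}|$ is even, then $|\overline{X_i}\cap V_1|=|\overline{X_i}\cap V_2|$ and $\big||X_i\cap V_1|-|X_i\cap V_2|\big|\le 1$; (ii) if $X_i$ crosses $H$ and $|\overline{X_i}|$ is odd, then $\big||\overline{X_i}\cap V_1|-|\overline{X_i}\cap V_2|\big|=1$ and $\big||X_i\cap V_1|-|X_i\cap V_2|\big|\le 2$.
   Context: A bisection of a graph $G$ is a bipartite spanning subgraph $H$ of $G$ with partition sets $V_1,V_2$ (every edge of $H$ joins $V_1$ and $V_2$) with $||V_1|-|V_2||\le 1$. It is good if $2d_H(v)\ge d_G(v)-1$ for every $v\in V(G)$. For $W\subseteq V(G)$, $\overline{W}=V(G)\setminus W$. A partition set $X_i$ crosses $H$ if $X_i\cap V_1\neq\emptyset$ and $X_i\cap V_2\ne\emptyset$. *)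

From mathcomp Require Import all_boot all_order all_algebra.
Set Implicit Arguments. Unset Strict Implicit. Unset Printing Implicit Defensive.

(* A simple graph on a finite vertex type T is given by its adjacency relation. *)

(* The complete multipartite graph whose partition sets are the fibres of
   [c : T -> 'I_k]: two vertices are adjacent iff they lie in different parts. *)
Definition cmp_graph (T : finType) (k : nat) (c : T -> 'I_k) : rel T :=
  fun x y => c x != c y.

Definition part (T : finType) (k : nat) (c : T -> 'I_k) (i : 'I_k) : {set T} :=
  [set x | c x == i].

Definition deg (T : finType) (e : rel T) (v : T) : nat := #|[set u | e v u]|.

(* H (adjacency h) is a bisection of G (adjacency g) with partition sets
   V1 and V2 = complement of V1: a spanning subgraph (same vertex set T) of G,
   which is a graph (symmetric), every edge of H joins V1 and V2,
   and | |V1| - |V2| | <= 1. *)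
Definition bisection (T : finType) (g h : rel T) (V1 : {set T}) : Prop :=
  [/\ symmetric h,
      (forall x y, h x y -> g x y),
      (forall x y, h x y -> (x \in V1) != (y \in V1)) &
      (`|#|V1|%:Z - #|~: V1|%:Z| <= 1)%R].

Definition good_bisection (T : finType) (g h : rel T) (V1 : {set T}) : Prop :=
  bisection g h V1 /\
  (forall v : T, ((deg g v)%:Z - 1 <= 2 * (deg h v)%:Z)%R).

Definition crosses (T : finType) (X V1 : {set T}) : Prop :=
  X :&: V1 != set0 /\ X :&: ~: V1 != set0.

From mathcomp Require Import all_boot all_order all_algebra.
From mathcomp Require Import zify.
Import Order.TTheory GRing.Theory Num.Theory.

(* A vertex v of X_i has all of its G-neighbours in the complement of X_i, and
   its H-neighbours on the other side of the bisection; goodness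
   (2 d_H(v) >= d_G(v) - 1) therefore forces each side of the bisection to
   contain at least about half of the complement of X_i. Since X_i crosses H,
   this applies to both sides, so the complement of X_i is split as evenly as
   possible; the balance of |V1| and |V2| then transfers to X_i itself. *)

Lemma odd_add_adjacent (a b : nat) :
  a <= b.+1 -> b <= a.+1 -> odd (a + b) = (a != b).
Proof.
move=> ab ba; case: (ltngtP a b) => [lt_ab | lt_ba | ->].
- have -> : b = a.+1 by lia.
  by rewrite addnS /= addnn odd_double.
- have -> : a = b.+1 by lia.
  by rewrite addSn /= addnn odd_double.
- by rewrite addnn odd_double.
Qed.

Lemma cardsIDC (T : finType) (A B : {set T}) :
  #|A| = #|A :&: B| + #|A :&: ~: B|.
Proof. by rewrite -(cardsID B A) setDE. Qed.

Section GoodBisection.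

Local Set Implicit Arguments.
Local Unset Strict Implicit.

Variables (T : finType) (k : nat) (c : T -> 'I_k) (h : rel T).

Lemma deg_cmp_graph (v : T) : deg (cmp_graph c) v = #|~: part c (c v)|.
Proof. by apply: eq_card => u; rewrite !inE /cmp_graph eq_sym. Qed.

Lemma good_bisectionC (g : rel T) (V1 : {set T}) :
  good_bisection g h V1 -> good_bisection g h (~: V1).
Proof.
case=> [[h_sym h_sub h_cross h_bal] h_deg]; split=> //; split=> //.
- by move=> x y /h_cross; rewrite !inE; case: (x \in V1); case: (y \in V1).
- by rewrite setCK distrC.
Qed.

Lemma deg_bisection_cmp (V1 : {set T}) (v : T) :
  bisection (cmp_graph c) h V1 -> v \in V1 ->
  deg h v <= #|~: part c (c v) :&: ~: V1|.
Proof.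
case=> _ h_sub h_cross _ vV1; apply: subset_leq_card; apply/subsetP => u.
rewrite !inE => huv; move: (h_sub _ _ huv) (h_cross _ _ huv).
by rewrite /cmp_graph vV1 eq_sym => ->; case: (u \in V1).
Qed.

Lemma good_bisection_cmp_bound (V1 : {set T}) (v : T) :
  good_bisection (cmp_graph c) h V1 -> v \in V1 ->
  #|~: part c (c v)| <= (2 * #|~: part c (c v) :&: ~: V1|).+1.
Proof.
case=> h_bis h_deg vV1; have := h_deg v; rewrite deg_cmp_graph.
have := deg_bisection_cmp h_bis vV1; lia.
Qed.

Lemma crossing_part_complement_balanced (V1 : {set T}) (i : 'I_k) :
  good_bisection (cmp_graph c) h V1 -> crosses (part c i) V1 ->
  let a := #|~: part c i :&: V1| in
  let b := #|~: part c i :&: ~: V1| in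
  a <= b.+1 /\ b <= a.+1.
Proof.
move=> h_good [/set0Pn [v vXV1] /set0Pn [w wXV2]] a b.
move: vXV1 wXV2; rewrite !in_setI !inE -in_setC => /andP [/eqP cv vV1].
move=> /andP [/eqP cw wV2].
have := good_bisection_cmp_bound h_good vV1.
have := good_bisection_cmp_bound (good_bisectionC h_good) wV2.
rewrite setCK cv cw (cardsIDC _ (~: part c i) V1) -/a -/b; lia.
Qed.

End GoodBisection.

Theorem lemma3p1 (k : nat) (r : 'I_k -> nat) (T : finType) (c : T -> 'I_k)
  (Hsize : forall i : 'I_k, #|part c i| = r i)
  (h : rel T) (V1 : {set T})
  (Hgood : good_bisection (cmp_graph c) h V1) :
  forall i : 'I_k,
    let X := part c i in
    let V2 := ~: V1 in
    (crosses X V1 -> ~~ odd #|~: X| ->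
       #|~: X :&: V1| = #|~: X :&: V2| /\
       (`|#|X :&: V1|%:Z - #|X :&: V2|%:Z| <= 1)%R) /\
    (crosses X V1 -> odd #|~: X| ->
       `|#|~: X :&: V1|%:Z - #|~: X :&: V2|%:Z|%R = 1%R /\
       (`|#|X :&: V1|%:Z - #|X :&: V2|%:Z| <= 2)%R).
Proof.
move=> i X V2; rewrite {}/X {}/V2.
have [[_ _ _ h_bal] _] := Hgood.
rewrite (cardsIDC _ V1 (part c i)) (cardsIDC _ (~: V1) (part c i)) in h_bal.
rewrite ![V1 :&: _]setIC ![~: V1 :&: _]setIC in h_bal.
rewrite (cardsIDC _ (~: part c i) V1).
split=> h_cross; have [ab ba] := crossing_part_complement_balanced Hgood h_cross;
  rewrite odd_add_adjacent // ?negbK => /eqP parity.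
- by split=> //; lia.
- split; lia.
Qed.
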